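(* Let $\alpha \in \mathbb{R}_{>0}$ with $\alpha \neq 1$, and let $M_\alpha = \{f(\alpha) \mid f(x) \in \mathbb{N}_0[x,x^{-1}]\}$ as an additive monoid. Then $M_\alpha$ is not atomic if and only if the additive monoid $(\mathbb{N}_0[\alpha],+) = \{f(\alpha) \mid f(x) \in \mathbb{N}_0[x]\}$ is antimatter or finitely generated.
   Context: $\mathbb{N}_0[x,x^{-1}]$ denotes the semiring of Laurent polynomials with coefficients in $\mathbb{N}_0$. For a reduced additive monoid, an atom is a nonzero element not expressible as a sum of two nonzero elements; the monoid is atomic if every nonzero element is a sum of atoms, and antimatter if it has no atoms. *)

From mathcomp Require Import all_boot all_order all_algebra.
From mathcomp Require Import reals.
Set Implicit Arguments. Unset Strict Implicit. Unset Printing Implicit Defensive.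
Import Order.TTheory GRing.Theory Num.Theory.
Local Open Scope ring_scope.

Definition evalN0 {R : realType} (p : {poly nat}) (alpha : R) : R :=
  (map_poly (fun n : nat => (n%:R : R)) p).[alpha].

Definition N0_alpha {R : realType} (alpha : R) : R -> Prop :=
  fun x => exists p : {poly nat}, x = evalN0 p alpha.

(* M_alpha = { f(alpha) | f in N_0[x, x^{-1}] }; a Laurent polynomial with
   N_0 coefficients is x^{-n} p(x) with p in N_0[x] and n : nat. *)
Definition M_alpha {R : realType} (alpha : R) : R -> Prop :=
  fun x => exists (p : {poly nat}) (n : nat), x = evalN0 p alpha / alpha ^+ n.

Definition is_atom {R : realType} (S : R -> Prop) (a : R) : Prop :=
  S a /\ a <> 0 /\
  ~ (exists b c, S b /\ S c /\ b <> 0 /\ c <> 0 /\ a = b + c).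

Definition atomic {R : realType} (S : R -> Prop) : Prop :=
  forall x, S x -> x <> 0 ->
    exists l : seq R, (forall a, a \in l -> is_atom S a) /\ x = \sum_(a <- l) a.

Definition antimatter {R : realType} (S : R -> Prop) : Prop :=
  forall a, ~ is_atom S a.

Definition finitely_generated {R : realType} (S : R -> Prop) : Prop :=
  exists g : seq R, (forall a, a \in g -> S a) /\
    forall x, S x <-> exists c : seq nat,
      size c = size g /\ x = \sum_(i < size g) (nth 0%N c i)%:R * nth 0 g i.

From mathcomp Require Import all_boot all_order all_algebra.
From mathcomp Require Import boolp reals zify.
Import Order.TTheory GRing.Theory Num.Theory.
Local Open Scope ring_scope.

(* M_alpha and N_0[alpha] are the additive monoids generated by the powers
   alpha^e with e in Z, resp. e >= 0, so their atoms are powers of alpha.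
   Multiplying by powers of alpha shows that M_alpha fails to be atomic exactly
   when 1 splits as b + c in it, and that 1 splitting makes the monoid
   antimatter (for M_alpha and for N_0[alpha] alike).  If 1 is a sum of at
   least two powers alpha^e, each alpha^e < 1: for alpha < 1 every e is
   positive, so 1 already splits in N_0[alpha]; for alpha > 1 every e is
   negative, and multiplying by alpha^D writes alpha^D as an N_0-combination of
   1, ..., alpha^(D-1), which then generate N_0[alpha].  Conversely, if
   N_0[alpha] is finitely generated, alpha^D is such a combination for D past
   the degrees of the generators; as alpha != 1 it has at least two terms, and
   dividing by alpha^D splits 1 in M_alpha. *)

Definition reducible {R : realType} (S : R -> Prop) (x : R) : Prop :=
  exists b c, S b /\ S c /\ b <> 0 /\ c <> 0 /\ x = b + c.

Lemma antimatter_not_atomic {R : realType} {S : R -> Prop} {x : R} :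
  antimatter S -> S x -> x <> 0 -> ~ atomic S.
Proof.
move=> anti Sx x_neq0 /(_ x Sx x_neq0) [[|a l] [atoms x_eq]].
  by rewrite big_nil in x_eq.
by apply: (anti a); apply: atoms; rewrite mem_head.
Qed.

Lemma exprz_lt1_neg {R : realFieldType} (x : R) e : 1 < x -> x ^ e < 1 -> e < 0.
Proof. by move=> x_gt1; rewrite -(expr0z x) ltr_eXz2l. Qed.

Lemma exprz_lt1_pos {R : realFieldType} (x : R) e : 0 < x -> x < 1 -> x ^ e < 1 -> 0 < e.
Proof.
move=> x_gt0 x_lt1; rewrite -[x]invrK exprz_inv -oppr_lt0.
by apply: exprz_lt1_neg; rewrite invf_gt1.
Qed.

Lemma seq_int_lower_bound (s : seq int) :
  exists D : nat, all (fun e => - D%:Z <= e) s.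
Proof.
elim: s => [|e s [D s_ge]]; first by exists 0%N.
exists (D + `|e|)%N; rewrite /= (sub_all _ s_ge) ?andbT => [|f /=]; lia.
Qed.

Definition nonneg : pred int := fun e => 0 <= e.

Definition powsum {R : realType} (alpha : R) (s : seq int) : R :=
  \sum_(e <- s) alpha ^ e.

Definition pow_monoid {R : realType} (alpha : R) (E : pred int) (x : R) : Prop :=
  exists2 s, all E s & x = powsum alpha s.

Definition pow_monoid_below {R : realType} (alpha : R) (D : nat) : R -> Prop :=
  pow_monoid alpha (fun e => 0 <= e < D%:Z).

Section PowerSums.
Context {R : realType} {alpha : R}.
Hypothesis alpha_gt0 : 0 < alpha.

Let alpha_neq0 : alpha != 0. Proof. by rewrite gt_eqF. Qed.

Let exprz_neq0 e : alpha ^ e != 0. Proof. exact: expfz_neq0. Qed.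

Let predT_add (a b : int) : predT a -> predT b -> predT (a + b). Proof. by []. Qed.

Let nonneg_add (a b : int) : nonneg a -> nonneg b -> nonneg (a + b).
Proof. exact: addr_ge0. Qed.

Lemma powsum_nil : powsum alpha [::] = 0.
Proof. exact: big_nil. Qed.

Lemma powsum_cons e s : powsum alpha (e :: s) = alpha ^ e + powsum alpha s.
Proof. exact: big_cons. Qed.

Lemma powsum_cat s t : powsum alpha (s ++ t) = powsum alpha s + powsum alpha t.
Proof. exact: big_cat. Qed.

Lemma powsum_ge0 s : 0 <= powsum alpha s.
Proof. by apply: sumr_ge0 => e _; rewrite exprz_ge0 ?ltW. Qed.

Lemma powsum_gt0 s : s != [::] -> 0 < powsum alpha s.
Proof.
by case: s => // e s _; rewrite powsum_cons ltr_pwDl ?exprz_gt0 ?powsum_ge0.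
Qed.

Lemma mem_powsum_lt e s :
  e \in s -> (1 < size s)%N -> alpha ^ e < powsum alpha s.
Proof.
move=> s_e s_gt1; rewrite /powsum (perm_big _ (perm_to_rem s_e)) big_cons.
rewrite ltrDl; apply: powsum_gt0.
by rewrite -size_eq0 size_rem //; case: (size s) s_gt1 => [|[]].
Qed.

Lemma powsum_shift k s :
  alpha ^ k * powsum alpha s = powsum alpha [seq e + k | e <- s].
Proof.
rewrite /powsum big_map mulr_sumr; apply: eq_bigr => e _.
by rewrite expfzDr // mulrC.
Qed.

Lemma pow_monoid0 E : pow_monoid alpha E 0.
Proof. by exists [::]; rewrite // powsum_nil. Qed.

Lemma pow_monoid_exp (E : pred int) e : E e -> pow_monoid alpha E (alpha ^ e).
Proof. by move=> E_e; exists [:: e]; rewrite /= ?E_e // /powsum big_seq1. Qed.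

Lemma pow_monoidD E x y :
  pow_monoid alpha E x -> pow_monoid alpha E y -> pow_monoid alpha E (x + y).
Proof.
by move=> [s E_s ->] [t E_t ->]; exists (s ++ t); rewrite ?all_cat ?E_s ?powsum_cat.
Qed.

Lemma pow_monoidMn E x n : pow_monoid alpha E x -> pow_monoid alpha E (x *+ n).
Proof.
move=> E_x; elim: n => [|n IHn]; first by rewrite mulr0n; apply: pow_monoid0.
by rewrite mulrS; apply: pow_monoidD.
Qed.

Lemma pow_monoid_ind (E : pred int) (P : R -> Prop) :
  P 0 -> (forall x y, P x -> P y -> P (x + y)) -> (forall e, E e -> P (alpha ^ e)) ->
  forall x, pow_monoid alpha E x -> P x.
Proof.
move=> P0 PD Pexp x [s]; elim: s x => [|e s IHs] x /=.
  by rewrite powsum_nil => _ ->.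
move=> /andP[E_e E_s] ->; rewrite powsum_cons.
by apply: PD; [apply: Pexp | apply: IHs].
Qed.

Lemma sub_pow_monoid_exp (E E' : pred int) x :
  (forall e, E' e -> pow_monoid alpha E (alpha ^ e)) ->
  pow_monoid alpha E' x -> pow_monoid alpha E x.
Proof.
by move=> genE'; apply: pow_monoid_ind => //; [apply: pow_monoid0 | apply: pow_monoidD].
Qed.

Lemma sub_pow_monoid (E E' : pred int) x :
  subpred E' E -> pow_monoid alpha E' x -> pow_monoid alpha E x.
Proof. by move=> subE; apply: sub_pow_monoid_exp => e /subE /pow_monoid_exp. Qed.

Lemma pow_monoid_below_mono D D' x :
  (D <= D')%N -> pow_monoid_below alpha D x -> pow_monoid_below alpha D' x.
Proof. by move=> leDD'; apply: sub_pow_monoid => e /=; lia. Qed.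

Lemma reducible_pow_monoidP E x :
  reducible (pow_monoid alpha E) x <->
  exists2 s, all E s & (1 < size s)%N /\ x = powsum alpha s.
Proof.
split.
  move=> [b [c [[sb E_sb ->] [[sc E_sc ->] [b_neq0 [c_neq0 ->]]]]]].
  exists (sb ++ sc); first by rewrite all_cat E_sb.
  rewrite powsum_cat size_cat; split=> //.
  case: sb sc b_neq0 c_neq0 {E_sb E_sc} => [|e sb] [|f sc]; rewrite ?powsum_nil //.
  by rewrite /= addnS.
move=> [s E_s [s_gt1 ->]]; case: s s_gt1 E_s => [|e [|f s]] //= _ /andP[E_e E_s].
exists (alpha ^ e), (powsum alpha (f :: s)); split; first exact: pow_monoid_exp.
split; first by exists (f :: s).
split; first exact/eqP.
by split; [apply/eqP; rewrite gt_eqF ?powsum_gt0 | rewrite powsum_cons].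
Qed.

Lemma atom_pow_monoid (E : pred int) a :
  is_atom (pow_monoid alpha E) a -> exists2 e, E e & a = alpha ^ e.
Proof.
move=> [[[|e [|f s]] /= E_s ->] [a_neq0 a_irr]].
- by rewrite powsum_nil in a_neq0.
- by move: E_s => /andP[E_e _]; exists e; rewrite // /powsum big_seq1.
- by case: a_irr; apply/reducible_pow_monoidP; exists [:: e, f & s].
Qed.

Lemma atomic_pow_monoid (E : pred int) :
  (forall e, E e -> is_atom (pow_monoid alpha E) (alpha ^ e)) ->
  atomic (pow_monoid alpha E).
Proof.
move=> atoms x [s E_s ->] _; exists [seq alpha ^ e | e <- s]; split; last first.
  by rewrite big_map.
by move=> a /mapP[e s_e ->]; apply: atoms; move/allP: E_s; apply.
Qed.

Section AdditivelyClosed.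
Variable E : pred int.
Hypothesis E_add : forall a b, E a -> E b -> E (a + b).

Lemma pow_monoid_shift k x :
  E k -> pow_monoid alpha E x -> pow_monoid alpha E (alpha ^ k * x).
Proof.
move=> E_k [s E_s ->]; exists [seq e + k | e <- s]; last exact: powsum_shift.
by rewrite all_map; apply/allP => e s_e /=; apply: E_add => //; move/allP: E_s; apply.
Qed.

Lemma reducible_pow_monoid_shift k x :
  E k -> reducible (pow_monoid alpha E) x ->
  reducible (pow_monoid alpha E) (alpha ^ k * x).
Proof.
move=> E_k [b [c [E_b [E_c [b_neq0 [c_neq0 ->]]]]]].
exists (alpha ^ k * b), (alpha ^ k * c); rewrite mulrDr.
split; first exact: pow_monoid_shift.
split; first exact: pow_monoid_shift.
by split; [|split=> //]; apply/eqP; rewrite mulf_neq0 //; apply/eqP.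
Qed.

Lemma antimatter_pow_monoidE :
  E 0 -> antimatter (pow_monoid alpha E) <-> reducible (pow_monoid alpha E) 1.
Proof.
move=> E_0; split.
  move=> anti; apply: contrapT => one_irr; apply: (anti 1); split.
    by rewrite -(expr0z alpha); apply: pow_monoid_exp.
  by split=> //; apply/eqP; rewrite oner_eq0.
move=> one_red a /[dup] /atom_pow_monoid[e E_e ->] [_ [_ []]].
by rewrite -[alpha ^ e]mulr1; apply: reducible_pow_monoid_shift.
Qed.

End AdditivelyClosed.

Lemma not_atomic_pow_monoidT :
  ~ atomic (pow_monoid alpha predT) <-> reducible (pow_monoid alpha predT) 1.
Proof.
have one_in : pow_monoid alpha predT 1 by rewrite -(expr0z alpha); apply: pow_monoid_exp.
split; last first.
  move=> one_red; apply: (antimatter_not_atomic _ one_in); last exact/eqP/oner_neq0.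
  exact: (antimatter_pow_monoidE _ predT_add erefl).2 one_red.
apply: contra_notP => one_irr; apply: atomic_pow_monoid => e _.
split; first exact: pow_monoid_exp.
split; first exact/eqP.
move=> /(reducible_pow_monoid_shift _ predT_add (- e) _ erefl).
by rewrite -expfzDr // addNr expr0z.
Qed.

Lemma reducible_one_nonneg :
  alpha < 1 -> reducible (pow_monoid alpha predT) 1 ->
  reducible (pow_monoid alpha nonneg) 1.
Proof.
move=> alpha_lt1 /reducible_pow_monoidP[s _ [s_gt1 one_eq]].
apply/reducible_pow_monoidP.
exists s => //; apply/allP => e s_e; apply: ltW.
by apply: (exprz_lt1_pos _ _ alpha_gt0 alpha_lt1); rewrite one_eq mem_powsum_lt.
Qed.

Lemma reducible_one_below :
  1 < alpha -> reducible (pow_monoid alpha predT) 1 ->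
  exists D, pow_monoid_below alpha D (alpha ^+ D).
Proof.
move=> alpha_gt1 /reducible_pow_monoidP[s _ [s_gt1 one_eq]].
have s_neg : all (fun e => e < 0) s.
  apply/allP => e s_e; apply: (exprz_lt1_neg _ _ alpha_gt1).
  by rewrite one_eq mem_powsum_lt.
have [D s_ge] := seq_int_lower_bound s.
exists D, [seq e + D%:Z | e <- s]; last by rewrite -powsum_shift -one_eq mulr1.
rewrite all_map; apply/allP => e s_e /=.
by move/allP: s_neg => /(_ e s_e); move/allP: s_ge => /(_ e s_e) /=; lia.
Qed.

Lemma below_reducible_one D :
  alpha != 1 -> pow_monoid_below alpha D (alpha ^+ D) ->
  reducible (pow_monoid alpha predT) 1.
Proof.
move=> alpha_neq1 [t t_below alphaD_eq].
have t_gt1 : (1 < size t)%N.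
  case: t t_below alphaD_eq => [|e [|f t]] //=.
    by rewrite powsum_nil => _ /eqP; rewrite expf_eq0 (negPf alpha_neq0) andbF.
  rewrite andbT /powsum big_seq1 => /andP[_ e_lt].
  by move=> /(@ieexprIz _ _ alpha_gt0 alpha_neq1 D%:Z e) D_eq; rewrite -D_eq ltxx in e_lt.
have : reducible (pow_monoid alpha predT) (alpha ^+ D).
  by apply/reducible_pow_monoidP; exists t => //; apply: all_predT.
move=> /(reducible_pow_monoid_shift _ predT_add (- D%:Z) _ erefl).
by rewrite -exprnN mulVf // expf_neq0.
Qed.

Lemma pow_monoid_below_exprn D k :
  pow_monoid_below alpha D (alpha ^+ D) -> pow_monoid_below alpha D (alpha ^+ k).
Proof.
move=> [t t_below alphaD_eq]; elim/ltn_ind: k => k IHk.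
have [k_lt | k_ge] := ltnP k D.
  by apply: (pow_monoid_exp _ (Posz k)) => /=; lia.
have -> : alpha ^+ k = powsum alpha [seq e + (k - D)%N%:Z | e <- t].
  by rewrite -powsum_shift -alphaD_eq -exprD subnK.
apply: (@sub_pow_monoid_exp _ (fun e => 0 <= e < k%:Z)).
  by case=> // j /andP[_ j_lt]; apply: IHk.
exists [seq e + (k - D)%N%:Z | e <- t] => //.
by rewrite all_map; apply/allP => e /(allP t_below) /=; lia.
Qed.

Lemma pow_monoid_below_nonneg D x :
  pow_monoid_below alpha D (alpha ^+ D) ->
  pow_monoid alpha nonneg x -> pow_monoid_below alpha D x.
Proof.
move=> alphaD_below; apply: sub_pow_monoid_exp.
by case=> // k _; apply: pow_monoid_below_exprn.
Qed.

Lemma pow_monoid_below_coords D x :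
  pow_monoid_below alpha D x ->
  exists f : nat -> nat, x = \sum_(i < D) (f i)%:R * alpha ^+ i.
Proof.
move: x; apply: pow_monoid_ind.
- by exists (fun _ => 0%N); rewrite big1 // => i _; rewrite mul0r.
- move=> _ _ [f ->] [g ->]; exists (fun i => f i + g i)%N.
  by rewrite -big_split; apply: eq_bigr => i _; rewrite natrD mulrDl.
- case=> // j /andP[_ j_lt]; exists (fun i => (i == j) : nat).
  rewrite (bigD1 (Ordinal j_lt)) //= eqxx mul1r big1 ?addr0 // => i /negbTE.
  by rewrite -val_eqE /= => ->; rewrite mul0r.
Qed.

Lemma below_finitely_generated D :
  pow_monoid_below alpha D (alpha ^+ D) -> finitely_generated (pow_monoid alpha nonneg).
Proof.
move=> alphaD_below; exists (mkseq (GRing.exp alpha) D); split.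
  by move=> a /mapP[i _ ->]; apply: (pow_monoid_exp nonneg (Posz i)).
move=> x; rewrite size_mkseq; split.
  move=> /(pow_monoid_below_nonneg _ _ alphaD_below) /pow_monoid_below_coords[f ->].
  exists (mkseq f D); rewrite size_mkseq; split=> //.
  by apply: eq_bigr => i _; rewrite !nth_mkseq.
move=> [c [_ ->]]; apply: big_ind => [|y z|i _].
- exact: pow_monoid0.
- exact: pow_monoidD.
by rewrite nth_mkseq // mulr_natl; apply/pow_monoidMn/(pow_monoid_exp nonneg (Posz i)).
Qed.

Lemma pow_monoid_nonneg_below x :
  pow_monoid alpha nonneg x -> exists D, pow_monoid_below alpha D x.
Proof.
move: x; apply: pow_monoid_ind.
- by exists 0%N; apply: pow_monoid0.
- move=> y z [D y_below] [D' z_below]; exists (maxn D D').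
  by apply: pow_monoidD; apply: pow_monoid_below_mono;
    [exact: leq_maxl | | exact: leq_maxr |].
- by case=> // k _; exists k.+1; apply: pow_monoid_exp => /=; lia.
Qed.

Lemma finitely_generated_below :
  finitely_generated (pow_monoid alpha nonneg) ->
  exists D, pow_monoid_below alpha D (alpha ^+ D).
Proof.
move=> [g [g_in g_gen]].
have [D g_below] : exists D, forall a, a \in g -> pow_monoid_below alpha D a.
  elim: g g_in {g_gen} => [|a g IHg] g_in; first by exists 0%N.
  have [D a_below] := pow_monoid_nonneg_below _ (g_in a (mem_head a g)).
  have [D' g_below] := IHg (fun b g_b => g_in b (mem_behead (s := a :: g) g_b)).
  exists (maxn D D') => b; rewrite in_cons => /predU1P[-> | g_b].
    exact: pow_monoid_below_mono (leq_maxl D D') a_below.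
  exact: pow_monoid_below_mono (leq_maxr D D') (g_below b g_b).
exists D; have [c [_ ->]] := (g_gen (alpha ^+ D)).1 (pow_monoid_exp nonneg (Posz D) isT).
apply: big_ind => [|y z|i _].
- exact: pow_monoid0.
- exact: pow_monoidD.
by rewrite mulr_natl; apply/pow_monoidMn/g_below; rewrite mem_nth.
Qed.

(* The right operand of [*+] is in [nat_scope], where [n`_pi] is the pi-part of [n]. *)
Lemma evalN0E (p : {poly nat}) :
  evalN0 p alpha = \sum_(i < size p) alpha ^+ i *+ (p`_i)%R.
Proof.
rewrite /evalN0 horner_coef size_map_inj_poly //; last exact: mulrIn (oner_neq0 R).
by apply: eq_bigr => i _; rewrite coef_map_id0 // mulr_natl.
Qed.

Lemma N0_alphaE : N0_alpha alpha = pow_monoid alpha nonneg.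
Proof.
apply/funext => x; apply/propext; split.
  move=> [p ->]; rewrite evalN0E; apply: big_ind => [|y z|i _].
  - exact: pow_monoid0.
  - exact: pow_monoidD.
  by apply/pow_monoidMn/(pow_monoid_exp nonneg (Posz i)).
move: x; apply: pow_monoid_ind.
- by exists 0; rewrite evalN0E size_poly0 big_ord0.
- by move=> _ _ [p ->] [q ->]; exists (p + q); rewrite /evalN0 rmorphD hornerD.
- by case=> // k _; exists 'X^k; rewrite /evalN0 map_polyXn hornerXn.
Qed.

Lemma M_alphaE : M_alpha alpha = pow_monoid alpha predT.
Proof.
apply/funext => x; apply/propext; split.
  move=> [p [n ->]]; rewrite mulrC exprnN; apply: (pow_monoid_shift _ predT_add) => //.
  by apply: (@sub_pow_monoid _ nonneg) => //; rewrite -N0_alphaE; exists p.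
have N0_eval p : N0_alpha alpha (evalN0 p alpha) by exists p.
have N0_exp k : N0_alpha alpha (alpha ^+ k).
  by rewrite N0_alphaE; apply: (pow_monoid_exp nonneg (Posz k)).
have N0D y z : N0_alpha alpha y -> N0_alpha alpha z -> N0_alpha alpha (y + z).
  by rewrite N0_alphaE; apply: pow_monoidD.
have N0_shift y k : N0_alpha alpha y -> N0_alpha alpha (y * alpha ^+ k).
  by rewrite mulrC N0_alphaE; apply: (pow_monoid_shift _ nonneg_add (Posz k)).
move: x; apply: pow_monoid_ind.
- by exists 0, 0%N; rewrite /evalN0 map_poly0 horner0 mul0r.
- move=> _ _ [p [n ->]] [q [m ->]].
  have [r r_eq] := N0D _ _ (N0_shift _ m (N0_eval p)) (N0_shift _ n (N0_eval q)).
  by exists r, (n + m)%N; rewrite -r_eq addf_div ?expf_neq0 // exprD.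
- case=> k _.
    by have [p p_eq] := N0_exp k; exists p, 0%N; rewrite -p_eq divr1.
  have [p p_eq] := N0_exp 0%N; exists p, k.+1.
  by rewrite -p_eq expr0 div1r NegzE -exprnN.
Qed.

Lemma reducible_one_pow_monoidT :
  alpha != 1 -> reducible (pow_monoid alpha predT) 1 <->
  reducible (pow_monoid alpha nonneg) 1 \/
  exists D, pow_monoid_below alpha D (alpha ^+ D).
Proof.
move=> alpha_neq1; split.
  case: (ltgtP alpha 1) alpha_neq1 => [alpha_lt1 | alpha_gt1 | ->] // _ one_red.
    by left; apply: reducible_one_nonneg.
  by right; apply: reducible_one_below.
case=> [|[D]]; last exact: below_reducible_one.
move=> /reducible_pow_monoidP[s _ s_gt1]; apply/reducible_pow_monoidP.
by exists s => //; apply: all_predT.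
Qed.

Lemma finitely_generated_pow_monoid_nonneg :
  finitely_generated (pow_monoid alpha nonneg) <->
  exists D, pow_monoid_below alpha D (alpha ^+ D).
Proof.
split; first exact: finitely_generated_below.
by move=> [D]; apply: below_finitely_generated.
Qed.

End PowerSums.

Theorem proposition3p4 (R : realType) (alpha : R) :
  0 < alpha -> alpha != 1 ->
  (~ atomic (M_alpha alpha) <->
   (antimatter (N0_alpha alpha) \/ finitely_generated (N0_alpha alpha))).
Proof.
move=> alpha_gt0 alpha_neq1.
rewrite (M_alphaE alpha_gt0) N0_alphaE (not_atomic_pow_monoidT alpha_gt0).
rewrite (reducible_one_pow_monoidT alpha_gt0 alpha_neq1).
rewrite (antimatter_pow_monoidE alpha_gt0 nonneg (@addr_ge0 _) isT).
by rewrite (finitely_generated_pow_monoid_nonneg alpha_gt0).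
Qed.
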